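(* Let $G$ be a graph with $n$ vertices and $m$ edges. Then $G$ is graceful if and only if $n\leqslant m+1$ and the vertices of $\widehat{G}$ can be arranged (ordered) in such a way that the adjacency matrix of $\widehat{G}$ becomes graceful.
   Context: Graphs are finite, simple and undirected. A graph $G=(V,E)$ with $m$ edges is graceful if there is an injective map $f:V\to\{0,1,\ldots,m\}$ such that the edge labels $|f(u)-f(v)|$, $uv\in E$, are pairwise distinct (such $f$ is a graceful labeling or $\beta$-labeling). If $G$ has $n\le m+1$ vertices, $\widehat{G}$ denotes the graph obtained from $G$ by adding $m+1-n$ isolated vertices. For a $p\times q$ matrix with rows indexed $1,\ldots,p$ and columns $1,\ldots,q$, the box-value of position $(i,j)$ is $p+j-i$, and for each $c=1,\ldots,p+q-1$ the set of positions with box-value $c$ is called a diagonal. A $0$-$1$ matrix is graceful if every diagonal contains at most one entry equal to $1$. *)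

From mathcomp Require Import all_boot all_order all_algebra.
Set Implicit Arguments. Unset Strict Implicit. Unset Printing Implicit Defensive.

(* A finite simple graph: vertex type T : finType, adjacency e : rel T
   (assumed symmetric and irreflexive in the theorem). *)

Definition edges (T : finType) (e : rel T) : {set {set T}} :=
  [set [set x; y] | x in T, y in T & e x y].

Definition nedges (T : finType) (e : rel T) : nat := #|edges e|.

Definition absdiff (a b : nat) : nat := (a - b) + (b - a).

Definition graceful_labeling (T : finType) (e : rel T) (f : T -> nat) : Prop :=
  injective f /\ (forall x, f x <= nedges e) /\
  (forall x y u v, e x y -> e u v ->
     absdiff (f x) (f y) = absdiff (f u) (f v) -> [set x; y] = [set u; v]).

Definition graceful (T : finType) (e : rel T) : Prop :=
  exists f : T -> nat, graceful_labeling e f.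

Definition hatV (T : finType) (e : rel T) : finType :=
  (T + 'I_((nedges e).+1 - #|T|))%type.

Definition hat_e (T : finType) (e : rel T) : rel (hatV e) :=
  fun u v => match u, v with inl x, inl y => e x y | _, _ => false end.

(* Adjacency matrix of G-hat w.r.t. an arrangement sigma of its vertices
   (sigma i = the vertex placed at row/column i). *)
Definition adj_mx (T : finType) (e : rel T) (p : nat) (sigma : 'I_p -> hatV e)
  : 'M[nat]_(p, p) :=
  \matrix_(i, j) (nat_of_bool (hat_e (sigma i) (sigma j))).

(* Graceful 0-1 matrix: entries in {0,1}, and every diagonal (positions with
   the same box-value p + j - i; with 0-based indices this is the same value)
   contains at most one entry equal to 1. *)
Definition graceful_mx (p q : nat) (A : 'M[nat]_(p, q)) : Prop :=
  (forall i j, A i j = 0 \/ A i j = 1) /\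
  (forall (i i' : 'I_p) (j j' : 'I_q), A i j = 1 -> A i' j' = 1 ->
     p + j - i = p + j' - i' -> i = i' /\ j = j').

(* A graceful labeling f of G, read as a placement of the vertices of G-hat
   on the positions 0..m (the m+1-n missing labels go to the isolated
   vertices), puts the 1 of an arc (x, y) of the adjacency matrix on the
   diagonal indexed by f y - f x.  So the matrix is graceful exactly when the
   signed differences f y - f x of the arcs are pairwise distinct, and for a
   symmetric irreflexive relation this is the same as the edge labels
   |f x - f y| being pairwise distinct. *)
From mathcomp Require Import all_boot all_order all_algebra.
From mathcomp Require Import zify.

Set Implicit Arguments.
Unset Strict Implicit.
Unset Printing Implicit Defensive.

Section ArcDifferences.

Variables (T : finType) (e : rel T).
Hypotheses (e_sym : symmetric e) (e_irr : irreflexive e).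

(* The signed difference [f y - f x] determines the arc [(x, y)]. *)
Definition arc_diff_inj (f : T -> nat) : Prop :=
  forall x y u v, e x y -> e u v -> f y + f u = f v + f x -> x = u /\ y = v.

Lemma edge_orient (f : T -> nat) x y : injective f -> e x y ->
  exists a b, [/\ e a b, f a < f b, [set x; y] = [set a; b]
                & absdiff (f x) (f y) = f b - f a].
Proof.
move=> finj exy; have fxy : f x != f y.
  by apply: contraTneq exy => /finj ->; rewrite e_irr.
case: (ltngtP (f x) (f y)) fxy => // lt_f _.
- by exists x, y; split=> //; rewrite /absdiff; lia.
- exists y, x; split; rewrite 1?e_sym 1?setUC //; rewrite /absdiff; lia.
Qed.

Lemma edge_labels_injP (f : T -> nat) : injective f ->
  (forall x y u v, e x y -> e u v ->
     absdiff (f x) (f y) = absdiff (f u) (f v) -> [set x; y] = [set u; v])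
  <-> arc_diff_inj f.
Proof.
move=> finj; split=> [labs x y u v exy euv dE | fdiff x y u v exy euv].
- have edgesE := labs _ _ _ _ exy euv ltac:(rewrite /absdiff; lia).
  have : x \in [set u; v] by rewrite -edgesE set21.
  have : y \in [set u; v] by rewrite -edgesE set22.
  rewrite !inE => /orP[]/eqP ey /orP[]/eqP ex; subst x y => //.
  + by rewrite e_irr in exy.
  + by have /finj uv : f u = f v by lia; rewrite uv e_irr in euv.
  + by rewrite e_irr in exy.
- have [a [b [eab lt_ab -> ->]]] := edge_orient finj exy.
  have [c [d [ecd lt_cd -> ->]]] := edge_orient finj euv.
  by move=> dE; have [-> ->] := fdiff a b c d eab ecd ltac:(lia).
Qed.

End ArcDifferences.

Lemma inj_extend_bij (T U : finType) (k : nat) (f : T -> U) :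
  injective f -> #|T| + k = #|U| ->
  exists g : T + 'I_k -> U, bijective g /\ forall x, g (inl x) = f x.
Proof.
move=> finj cardTU; pose C := ~: [set y in codom f].
have cardC : k = #|C|.
  by rewrite cardsCs setCK cardsE card_codom //; lia.
pose g u := match u with
  | inl x => f x
  | inr i => enum_val (cast_ord cardC i)
  end.
have notin_codom i : g (inr i) \notin codom f.
  by have := enum_valP (cast_ord cardC i); rewrite !inE.
have ginj : injective g.
  move=> [x|i] [y|j] /=.
  - by move/finj->.
  - by move=> fx; have := notin_codom j; rewrite /= -fx codom_f.
  - by move=> fy; have := notin_codom i; rewrite /= fy codom_f.
  - by move/enum_val_inj/cast_ord_inj->.
exists g; split=> //; apply: (inj_card_bij ginj).
by rewrite card_sum card_ord cardTU.
Qed.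

Section AdjacencyMatrix.

Variables (T : finType) (e : rel T) (p : nat).
Variables (sigma : 'I_p -> hatV e) (pos : hatV e -> 'I_p).
Hypotheses (sigmaK : cancel sigma pos) (posK : cancel pos sigma).

Lemma adj_mx_pos x y : adj_mx sigma (pos (inl x)) (pos (inl y)) = e x y.
Proof. by rewrite mxE !posK. Qed.

Lemma adj_mx_eq1 i j : adj_mx sigma i j = 1 ->
  exists x y, [/\ e x y, i = pos (inl x) & j = pos (inl y)].
Proof.
rewrite mxE; case Ei: (sigma i) => [x|?]; case Ej: (sigma j) => [y|?] //=.
by case exy: (e x y) => // _; exists x, y; rewrite -Ei -Ej !sigmaK.
Qed.

Lemma box_value_eq (i i' j j' : 'I_p) :
  (p + j - i = p + j' - i') <-> (j + i' = j' + i).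
Proof. by have := ltn_ord i; have := ltn_ord i'; split; lia. Qed.

Lemma graceful_adj_mxP :
  graceful_mx (adj_mx sigma) <->
  arc_diff_inj e (fun x => nat_of_ord (pos (inl x))).
Proof.
have pos_inj : injective pos := can_inj posK.
split=> [[_ gdiag] x y u v exy euv dE | adiff].
  have [/pos_inj[->] /pos_inj[->]] //:= gdiag _ _ _ _
    (etrans (adj_mx_pos x y) (congr1 nat_of_bool exy))
    (etrans (adj_mx_pos u v) (congr1 nat_of_bool euv))
    ((box_value_eq _ _ _ _).2 dE).
split=> [i j | i i' j j'].
  by rewrite mxE; case: hat_e; [right|left].
move=> /adj_mx_eq1[x [y [exy -> ->]]] /adj_mx_eq1[u [v [euv -> ->]]].
by move=> /box_value_eq dE; have [-> ->] := adiff x y u v exy euv dE.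
Qed.

End AdjacencyMatrix.

Theorem theorem2p3 (T : finType) (e : rel T)
  (esym : symmetric e) (eirr : irreflexive e) :
  graceful e <->
  (#|T| <= (nedges e).+1 /\
   exists sigma : 'I_(nedges e).+1 -> hatV e,
     bijective sigma /\ graceful_mx (adj_mx sigma)).
Proof.
split=> [[f [finj [f_le flab]]] | [_ [sigma [[pos sigmaK posK] gmx]]]].
- set m := nedges e; pose f' x : 'I_m.+1 := inord (f x).
  have f'E x : (f' x : nat) = f x by rewrite inordK // ltnS f_le.
  have f'inj : injective f'.
    by move=> x y /(congr1 (@nat_of_ord _)); rewrite !f'E => /finj.
  have card_le : #|T| <= m.+1 by rewrite -[m.+1]card_ord; apply: leq_card f'inj.
  have [pos [[sigma posK sigmaK] posE]] :=
    inj_extend_bij (k := m.+1 - #|T|) f'inj ltac:(by rewrite card_ord subnKC).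
  split=> //; exists sigma; split; first exact: Bijective sigmaK posK.
  have fdiff : arc_diff_inj e f := (edge_labels_injP esym eirr finj).1 flab.
  apply/(graceful_adj_mxP sigmaK posK) => x y u v.
  by rewrite !posE !f'E; apply: fdiff.
- pose F x := nat_of_ord (pos (inl x)).
  have Finj : injective F by move=> x y /val_inj/(can_inj posK)[].
  exists F; split=> //; split=> [x | ]; first by rewrite -ltnS ltn_ord.
  by apply/(edge_labels_injP esym eirr Finj)/(graceful_adj_mxP sigmaK posK).
Qed.
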